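(* Assume $\chi$ is weakly generic, let $\sigma=\sigma_{a,b}$ be a Serre weight with $\mathcal{S}(\chi_1,\chi_2,\sigma)\neq\varnothing$, let $(J,x)$ be its maximal element, and let $s,t,r,\xi$ be as in the context. Suppose $\kappa\in\Sigma$ satisfies $t_\kappa<r_\kappa$. Then $v_p(\xi_\kappa-t_\kappa(p^f-1))>1$ if and only if $e=1$ and $r_\tau=p$, $n_\tau=1$ and $t_\tau=0$ for all $\tau\in\Sigma$.
   Context: Let $p$ be a prime, $K/\mathbf{Q}_p$ finite with residue field $k$, residue degree $f$, ramification index $e$; $I_K$ inertia; $v_p$ is the $p$-adic valuation on $\mathbf{Q}$. Fix $\varpi\in\overline{K}$ with $\varpi^{p^f-1}$ a uniformiser; $\omega\colon G_K\to k^\times$ sends $g$ to the reduction of $g(\varpi)/\varpi$. $\Sigma=\mathrm{Hom}_{\mathbf{F}_p}(k,\overline{\mathbf{F}}_p)$, $\varphi(x)=x^p$, $\omega_\tau=\tau\circ\omega$, $\Omega_{\tau,a}=\sum_{i=0}^{f-1}p^ia_{\tau\circ\varphi^i}$. $\chi_1,\chi_2\colon G_K\to\overline{\mathbf{F}}_p^\times$ continuous, $\chi=\chi_1\chi_2^{-1}=\psi\prod_\tau\omega_\tau^{n_\tau}$, $\psi$ unramified, $n_\tau\in[1,p]$, some $n_\tau<p$. Weakly generic: $n_\tau\in[e,p-e]$ for all $\tau$. Serre weight $\sigma_{a,b}=\bigotimes_\tau(\det^{b_\tau}\otimes\mathrm{Sym}^{a_\tau-b_\tau}k^2)\otimes_{k,\tau}\overline{\mathbf{F}}_p$,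 $a_\tau-b_\tau\in[0,p-1]$; $r_\tau=a_\tau-b_\tau+1$. $\mathcal{S}(\chi_1,\chi_2,\sigma)$: pairs $(J,x)$, $J\subseteq\Sigma$, $x_\tau\in[0,e-1]$, with $\chi_1|_{I_K}=\prod_{\tau\in J}\omega_\tau^{a_\tau+1+x_\tau}\prod_{\tau\notin J}\omega_\tau^{b_\tau+x_\tau}$ and $\chi_2|_{I_K}=\prod_{\tau\notin J}\omega_\tau^{a_\tau+e-x_\tau}\prod_{\tau\in J}\omega_\tau^{b_\tau+e-1-x_\tau}$. $s(J,x)_\tau=r_\tau+x_\tau$ if $\tau\in J$, $x_\tau$ if $\tau\notin J$. Order: $(J,x)\preceq(J',x')$ iff $\Omega_{\tau,s(J',x')-s(J,x)}\in(p^f-1)\mathbf{Z}_{\ge0}$ for all $\tau$; a non-empty $\mathcal{S}$ has a unique maximal element. For the maximal $(J,x)$: $s=s(J,x)$, $t_\tau=a_\tau-b_\tau+e-s_\tau$, $\xi_\tau=(p^f-1)s_\tau+\Omega_{\tau,s-t}$. *)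

From HB Require Import structures.
From mathcomp Require Import all_boot all_order all_algebra.
Set Implicit Arguments.
Unset Strict Implicit.
Unset Printing Implicit Defensive.
Import Order.TTheory GRing.Theory Num.Theory.
Local Open Scope ring_scope.

(* Conventions:
   - Sigma = Hom(k, Fpbar) has f elements; we fix tau_0 and label
     tau_i := tau_0 o phi^i, i : 'I_f.  Then tau_i o phi^j = tau_((i+j) mod f)
     and omega_(tau_i) = omega_(tau_0)^(p^i).
   - A character of G_K restricted to I_K is a power omega_(tau_0)^c, with c
     well defined modulo p^f - 1; we record it by the integer exponent c. *)

Definition at_idx (f : nat) (a : 'I_f -> int) (k : nat) : int :=
  odflt 0 (omap a (insub (k %% f)%N : option 'I_f)).

Definition Omega (p f : nat) (a : 'I_f -> int) (j : 'I_f) : int :=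
  \sum_(i < f) (p ^ i)%:Z * at_idx a (j + i)%N.

(* exponent of omega_(tau_0) representing prod_tau omega_tau^(m_tau) *)
Definition omega_exp (p f : nat) (m : 'I_f -> int) : int :=
  \sum_(i < f) (p ^ i)%:Z * m i.

(* "omega_(tau_0)^c = prod_tau omega_tau^(m_tau)" as characters of I_K *)
Definition charI_eq (p f : nat) (c : int) (m : 'I_f -> int) : Prop :=
  (c = omega_exp p m %[mod ((p ^ f).-1)%:Z])%Z.

Definition r_of (f : nat) (a b : 'I_f -> int) (i : 'I_f) : int := a i - b i + 1.

(* membership of (J, x) in S(chi_1, chi_2, sigma_(a,b)); chi_1|I = omega_(tau_0)^c1,
   chi_2|I = omega_(tau_0)^c2 *)
Definition inS (p e f : nat) (c1 c2 : int) (a b : 'I_f -> int)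
    (J : {set 'I_f}) (x : 'I_f -> nat) : Prop :=
  [/\ forall i, (x i < e)%N,
      charI_eq p c1 (fun i => if i \in J then a i + 1 + (x i)%:Z
                              else b i + (x i)%:Z) &
      charI_eq p c2 (fun i => if i \notin J then a i + e%:Z - (x i)%:Z
                              else b i + e%:Z - 1 - (x i)%:Z)].

Definition s_of (f : nat) (a b : 'I_f -> int) (J : {set 'I_f}) (x : 'I_f -> nat)
    (i : 'I_f) : int :=
  if i \in J then r_of a b i + (x i)%:Z else (x i)%:Z.

Definition preceq (p f : nat) (a b : 'I_f -> int)
    (J : {set 'I_f}) (x : 'I_f -> nat) (J' : {set 'I_f}) (x' : 'I_f -> nat) : Prop :=
  forall j : 'I_f, exists k : nat,
    Omega p (fun i => s_of a b J' x' i - s_of a b J x i) j = ((p ^ f).-1)%:Z * k%:Z.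

Definition t_of (e f : nat) (a b : 'I_f -> int) (J : {set 'I_f}) (x : 'I_f -> nat)
    (i : 'I_f) : int :=
  a i - b i + e%:Z - s_of a b J x i.

Definition xi_of (p e f : nat) (a b : 'I_f -> int) (J : {set 'I_f}) (x : 'I_f -> nat)
    (i : 'I_f) : int :=
  ((p ^ f).-1)%:Z * s_of a b J x i
  + Omega p (fun j => s_of a b J x j - t_of e a b J x j) i.

(* v_p(m) > k for an integer m (with v_p(0) = +oo) *)
Definition vp_gt (p : nat) (m : int) (k : nat) : Prop :=
  m = 0 \/ (k < logn p `|m|)%N.

(* Writing D = s - t, one has xi_kappa - t_kappa (p^f - 1) = p Omega_(kappa+1)(D), so the
   valuation exceeds 1 exactly when p divides D at kappa+1.  Put gap = D - n.  The congruences
   defining S(chi_1, chi_2, sigma) make every Omega(gap) divisible by p^f - 1, and the quotients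
   (carries) satisfy gap_i = p carry_(i+1) - carry_i with -3 <= carry <= 1.  Modulo p this gives
   n_(kappa+1) = carry_(kappa+1), so either carry_(kappa+1) = 1, in which case every gap attains
   its maximum p - 1 and e, r, n, t are forced, or carry_(kappa+1) < 0.  In the latter case
   t_kappa < r_kappa forces e = 1, carry_kappa = -2 and r_kappa = 1; walking backwards from kappa
   the carries stay -2 along a run of embeddings outside J with r = p - 1, ending at one with
   r = p.  Removing kappa from J and adding the run yields an element of S whose Omega's exceed
   those of (J, x) by nonnegative multiples of p^f - 1, strictly at kappa, contradicting
   maximality. *)

From HB Require Import structures.
From mathcomp Require Import all_boot all_order all_algebra.
From mathcomp Require Import zify ring.
Import Order.TTheory GRing.Theory Num.Theory.
Set Implicit Arguments.
Unset Strict Implicit.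
Unset Printing Implicit Defensive.
Local Open Scope ring_scope.

Lemma pos_predn_int (m : nat) : (0 < m)%N -> (m.-1)%:Z = m%:Z - 1.
Proof. by case: m => // m _ /=; rewrite -addn1 PoszD addrK. Qed.

Lemma geometric_sum_int (p f : nat) :
  (p%:Z - 1) * \sum_(i < f) (p ^ i)%:Z = (p ^ f)%:Z - 1.
Proof.
elim: f => [|f IH]; first by rewrite big_ord0 expn0; ring.
by rewrite big_ord_recr /= mulrDr IH expnS PoszM; ring.
Qed.

Lemma vp_gt1_mulp (p : nat) (m : int) : prime p -> vp_gt p (p%:Z * m) 1 <-> (p%:Z %| m)%Z.
Proof.
move=> pr_p; have p_gt1 := prime_gt1 pr_p.
have p_neq0 : p%:Z != 0 by rewrite eqz_nat -lt0n ltnW.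
rewrite /vp_gt; split.
- case=> [/eqP|]; first by rewrite mulf_eq0 (negbTE p_neq0) => /eqP ->; rewrite dvdz0.
  have [-> | m_neq0 logp_gt1] := eqVneq m 0; first by rewrite dvdz0.
  have : (p ^ 2 %| `|(p%:Z * m)%R|)%N.
    by rewrite pfactor_dvdn // absz_gt0 mulf_neq0.
  by rewrite abszM expnS expn1 /= dvdn_pmul2l ?prime_gt0.
- move=> /dvdzP [q ->]; have [-> | q_neq0] := eqVneq q 0; first by left; rewrite !mul0r mulr0.
  right; rewrite -(pfactor_dvdn 2 pr_p) ?absz_gt0 ?mulf_neq0 //.
  by rewrite !abszM absz_nat mulnCA expnS expn1 dvdn_mull.
Qed.

Section CyclicSums.
Variables (p f : nat).
Hypotheses (p_gt0 : (0 < p)%N) (f_gt0 : (0 < f)%N).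

Local Notation N := ((p ^ f).-1)%:Z.
Local Notation geo := (\sum_(i < f) (p ^ i)%:Z).

Definition ord_mod (k : nat) : 'I_f := Ordinal (ltn_pmod k f_gt0).

Lemma ord_mod_ord (i : 'I_f) : ord_mod i = i.
Proof. by apply: val_inj; rewrite /= modn_small. Qed.

Lemma ordS_ord_mod k : ordS (ord_mod k) = ord_mod k.+1.
Proof. by apply: val_inj; rewrite /= -addn1 modnDml addn1. Qed.

Lemma at_idxE (a : 'I_f -> int) k : at_idx a k = a (ord_mod k).
Proof.
rewrite /at_idx; case: insubP => [u _ val_u | ] /=; last by rewrite ltn_pmod.
by congr a; apply: val_inj.
Qed.

Lemma at_idx_ord (a : 'I_f -> int) (i : 'I_f) : at_idx a i = a i.
Proof. by rewrite at_idxE ord_mod_ord. Qed.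

Lemma at_idx_ordS (a : 'I_f -> int) (j : 'I_f) : at_idx a j.+1 = a (ordS j).
Proof. by rewrite at_idxE -ordS_ord_mod ord_mod_ord. Qed.

Definition Omega_at (a : 'I_f -> int) (k : nat) : int :=
  \sum_(i < f) (p ^ i)%:Z * at_idx a (k + i).

Lemma Omega_at_ord (a : 'I_f -> int) (j : 'I_f) : Omega p a j = Omega_at a j.
Proof. by []. Qed.

Lemma Omega_ordS (a : 'I_f -> int) (j : 'I_f) : Omega p a (ordS j) = Omega_at a j.+1.
Proof.
apply: eq_bigr => i _; rewrite !at_idxE; congr (_ * a _).
by apply: val_inj; rewrite /= modnDml.
Qed.

Lemma geometric_sumE : (p%:Z - 1) * geo = N.
Proof. by rewrite geometric_sum_int pos_predn_int ?expn_gt0 ?p_gt0. Qed.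

Lemma Omega_at_nat (a : 'I_f -> int) k :
  Omega_at a k = \sum_(0 <= i < f) (p ^ i)%:Z * at_idx a (k + i).
Proof. by rewrite big_mkord. Qed.

Lemma Omega_at_head (a : 'I_f -> int) k :
  Omega_at a k = at_idx a k + \sum_(1 <= i < f) (p ^ i)%:Z * at_idx a (k + i).
Proof. by rewrite Omega_at_nat big_ltn // expn0 mul1r addn0. Qed.

Lemma Omega_atS (a : 'I_f -> int) k :
  p%:Z * Omega_at a k.+1 = Omega_at a k + N * at_idx a k.
Proof.
rewrite pos_predn_int ?expn_gt0 ?p_gt0 //.
rewrite [Omega_at a k.+1]Omega_at_nat [Omega_at a k]Omega_at_head mulr_sumr big_add1 /=.
rewrite -{1}(prednK f_gt0) big_nat_recr //= mulrA -PoszM -expnS prednK //.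
have -> : at_idx a (k.+1 + f.-1) = at_idx a k.
  rewrite addSnnS prednK // !at_idxE; congr a.
  by apply: val_inj; rewrite /= modnDr.
under eq_bigr do rewrite mulrA -PoszM -expnS addSnnS.
ring.
Qed.

Lemma Omega_at_dvd_from0 (a : 'I_f -> int) :
  (N %| Omega_at a 0)%Z -> forall k, (N %| Omega_at a k)%Z.
Proof.
move=> N_dvd0; elim=> [//|k IHk].
have -> : Omega_at a k.+1
    = (p ^ f.-1)%:Z * (Omega_at a k + N * at_idx a k) - N * Omega_at a k.+1.
  rewrite -Omega_atS mulrA -PoszM -expnSr prednK // pos_predn_int ?expn_gt0 ?p_gt0 //.
  ring.
apply: rpredB; last exact: dvdz_mulr (dvdzz _).
by apply/dvdz_mull/rpredD => //; exact: dvdz_mulr (dvdzz _).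
Qed.

Lemma Omega_at_head_dvd (a : 'I_f -> int) k : (p%:Z %| Omega_at a k - at_idx a k)%Z.
Proof.
rewrite Omega_at_head addrC addKr big_add1 /=.
by apply: rpred_sum => i _; rewrite expnS PoszM -mulrA dvdz_mulr.
Qed.

Lemma Omega_at_le (a : 'I_f -> int) c k :
  (forall i, a i <= c) -> Omega_at a k <= c * geo.
Proof.
move=> a_le; rewrite /Omega_at mulr_sumr; apply: ler_sum => i _.
by rewrite at_idxE [c * _]mulrC ler_wpM2l.
Qed.

Lemma Omega_at_ge (a : 'I_f -> int) c k :
  (forall i, c <= a i) -> c * geo <= Omega_at a k.
Proof.
move=> a_ge; rewrite /Omega_at mulr_sumr; apply: ler_sum => i _.
by rewrite at_idxE [c * _]mulrC ler_wpM2l.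
Qed.

Lemma Omega_at_ge_head (a : 'I_f -> int) c k :
  (forall i, c <= a i) -> at_idx a k + c * (geo - 1) <= Omega_at a k.
Proof.
move=> a_ge; rewrite Omega_at_head lerD2l.
have -> : geo = \sum_(0 <= i < f) (p ^ i)%:Z by rewrite big_mkord.
rewrite big_ltn // expn0 addrC addKr mulr_sumr; apply: ler_sum => i _.
by rewrite at_idxE [c * _]mulrC ler_wpM2l.
Qed.

Lemma ord_mod_addl_inj k : injective (fun i : 'I_f => ord_mod (k + i)).
Proof.
move=> i j /(congr1 val) /= /eqP; rewrite eqn_modDl !modn_small // => /eqP.
exact: val_inj.
Qed.

Lemma Omega_at_eq_max (a : 'I_f -> int) c k :
  (forall i, a i <= c) -> Omega_at a k = c * geo -> forall i, a i = c.
Proof.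
move=> a_le OmegaE.
have terms0 : \sum_(i < f) (p ^ i)%:Z * (c - a (ord_mod (k + i))) = 0.
  under eq_bigr do rewrite mulrBr.
  rewrite sumrB -mulr_suml mulrC -OmegaE; apply/eqP; rewrite subr_eq0.
  by apply/eqP/eq_bigr => i _; rewrite at_idxE.
have terms_ge0 : forall i : 'I_f, true -> 0 <= (p ^ i)%:Z * (c - a (ord_mod (k + i))).
  by move=> i _; rewrite mulr_ge0 // subr_ge0.
have [g _ g_cancel] := injF_bij (@ord_mod_addl_inj k) => i.
have /eqP := psumr_eq0P terms_ge0 terms0 (i := g i) isT.
by rewrite g_cancel mulf_eq0 eqz_nat expn_eq0 eqn0Ngt p_gt0 subr_eq0 => /eqP.
Qed.

Lemma Omega_at0 (a : 'I_f -> int) : Omega_at a 0 = omega_exp p a.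
Proof. by apply: eq_bigr => i _; rewrite add0n at_idx_ord. Qed.

Lemma dvdp_Omega_at (a : 'I_f -> int) k :
  (p%:Z %| Omega_at a k)%Z = (p%:Z %| at_idx a k)%Z.
Proof.
have head := Omega_at_head_dvd a k.
apply/idP/idP => dvd_p; last by rewrite -(subrK (at_idx a k) (Omega_at a k)) rpredD.
by rewrite -(subKr (Omega_at a k) (at_idx a k)) rpredB.
Qed.

Lemma Omega_at_shift (d m : 'I_f -> int) k :
  (forall i, d i = p%:Z * m (ordS i) - m i) -> Omega_at d k = N * at_idx m k.
Proof.
move=> dE; have -> : Omega_at d k = p%:Z * Omega_at m k.+1 - Omega_at m k.
  rewrite /Omega_at mulr_sumr -sumrB; apply: eq_bigr => i _.
  by rewrite !at_idxE dE ordS_ord_mod addSn; ring.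
by rewrite Omega_atS; ring.
Qed.

End CyclicSums.

Section BackwardDistance.
Variables (f : nat) (k : 'I_f).

Definition back_dist (i : 'I_f) : nat := if (i <= k)%N then (k - i)%N else (k + f - i)%N.

Lemma ordS_val (i : 'I_f) : ordS i = (if (i.+1 < f)%N then i.+1 else 0)%N :> nat.
Proof.
rewrite /=; case: ltnP => [/modn_small // | f_le].
by rewrite (@anti_leq i.+1 f) ?ltn_ord ?modnn.
Qed.

Lemma back_dist_lt i : (back_dist i < f)%N.
Proof. by rewrite /back_dist; have := ltn_ord k; case: (leqP i k); lia. Qed.

Lemma back_dist_eq0 i : (back_dist i == 0%N) = (i == k).
Proof.
rewrite -val_eqE /back_dist /=; have := ltn_ord i.
by case: (leqP i k) => ? ?; apply/eqP/eqP; lia.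
Qed.

Lemma back_dist_inj : injective back_dist.
Proof.
move=> i j; rewrite /back_dist => E; apply: val_inj; move: E => /=.
by have := ltn_ord i; have := ltn_ord j; case: (leqP i k); case: (leqP j k); lia.
Qed.

Lemma back_dist_ordS i : back_dist (ordS i) = if i == k then f.-1 else (back_dist i).-1.
Proof.
rewrite /back_dist ordS_val -val_eqE /=; have := ltn_ord i; have := ltn_ord k.
by case: (ltnP i.+1 f) => ? ? ?; rewrite ?leq0n; repeat case: ifP; lia.
Qed.

End BackwardDistance.

Section CharacterConditions.
Variables (p e f : nat) (c1 c2 : int) (a b : 'I_f -> int).

Local Notation N := ((p ^ f).-1)%:Z.

Lemma charI_eq_dvd c (m : 'I_f -> int) : charI_eq p c m <-> (N %| c - omega_exp p m)%Z.
Proof. by rewrite /charI_eq -eqz_mod_dvd; split => /eqP. Qed.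

Lemma omega_expB (u v : 'I_f -> int) :
  omega_exp p (fun i => u i - v i) = omega_exp p u - omega_exp p v.
Proof. by rewrite -sumrB; apply: eq_bigr => i _; rewrite mulrBr. Qed.

Lemma inSE J x : inS p e c1 c2 a b J x <->
  [/\ forall i, (x i < e)%N, charI_eq p c1 (fun i => b i + s_of a b J x i)
    & charI_eq p c2 (fun i => a i + e%:Z - s_of a b J x i)].
Proof.
have E1 : omega_exp p (fun i => if i \in J then a i + 1 + (x i)%:Z else b i + (x i)%:Z)
    = omega_exp p (fun i => b i + s_of a b J x i).
  by apply: eq_bigr => i _; rewrite /s_of /r_of; case: (i \in J) => /=; ring.
have E2 : omega_exp p (fun i => if i \notin J then a i + e%:Z - (x i)%:Z
                                else b i + e%:Z - 1 - (x i)%:Z)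
    = omega_exp p (fun i => a i + e%:Z - s_of a b J x i).
  by apply: eq_bigr => i _; rewrite /s_of /r_of; case: (i \in J) => /=; ring.
by rewrite /inS /charI_eq E1 E2.
Qed.

Lemma inS_move J x J' x' : inS p e c1 c2 a b J x -> (forall i, (x' i < e)%N) ->
  (N %| omega_exp p (fun i => s_of a b J' x' i - s_of a b J x i))%Z ->
  inS p e c1 c2 a b J' x'.
Proof.
move=> /inSE[_ /charI_eq_dvd dvd1 /charI_eq_dvd dvd2] x'_lt dvd_shift.
apply/inSE; split => //; apply/charI_eq_dvd.
- have -> : omega_exp p (fun i => b i + s_of a b J' x' i)
      = omega_exp p (fun i => b i + s_of a b J x i)
        + omega_exp p (fun i => s_of a b J' x' i - s_of a b J x i).
    by rewrite -big_split; apply: eq_bigr => i _ /=; ring.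
  by rewrite opprD addrA rpredB.
- have -> : omega_exp p (fun i => a i + e%:Z - s_of a b J' x' i)
      = omega_exp p (fun i => a i + e%:Z - s_of a b J x i)
        - omega_exp p (fun i => s_of a b J' x' i - s_of a b J x i).
    by rewrite -sumrB; apply: eq_bigr => i _ /=; ring.
  by rewrite opprB addrCA rpredD.
Qed.

End CharacterConditions.

Section MaximalElement.
Variables (p e f : nat) (c1 c2 : int) (n a b : 'I_f -> int).
Variables (J : {set 'I_f}) (x : 'I_f -> nat).
Hypotheses (pr_p : prime p) (f_gt0 : (0 < f)%N).
Hypothesis chiE : charI_eq p (c1 - c2) n.
Hypothesis n_generic : forall i, e%:Z <= n i <= p%:Z - e%:Z.
Hypothesis ab_range : forall i, 0 <= a i - b i <= p%:Z - 1.
Hypothesis Jx_in : inS p e c1 c2 a b J x.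
Hypothesis Jx_max : forall J' x', inS p e c1 c2 a b J' x' ->
  preceq p a b J x J' x' -> preceq p a b J' x' J x.

Local Notation N := ((p ^ f).-1)%:Z.
Local Notation geo := (\sum_(i < f) (p ^ i)%:Z).
Local Notation r := (r_of a b).
Local Notation s := (s_of a b J x).
Local Notation t := (t_of e a b J x).

Let p_gt1 : (1 < p)%N := prime_gt1 pr_p.
Let p_gt0 : (0 < p)%N := prime_gt0 pr_p.

Let x_lt i : (x i < e)%N.
Proof. by case: Jx_in. Qed.

Let N_factor : N = (p%:Z - 1) * geo.
Proof. by rewrite geometric_sumE. Qed.

Let geo_ge1 : 1 <= geo.
Proof. by rewrite (bigD1 (Ordinal f_gt0)) //= expn0 lerDl sumr_ge0. Qed.

Let N_neq0 : N != 0.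
Proof. by rewrite N_factor mulf_neq0 //; lia. Qed.

Definition gap i := s i - t i - n i.

(* The division is exact: see [Omega_gap_carry]. *)
Definition carry j := (Omega p gap j %/ N)%Z.

Lemma index_data i :
  [/\ 1 <= r i <= p%:Z, e%:Z <= n i <= p%:Z - e%:Z, (x i < e)%N,
      t i = r i - 1 + e%:Z - s i &
      (i \in J /\ s i = r i + (x i)%:Z) \/ (i \notin J /\ s i = (x i)%:Z)].
Proof.
have := ab_range i; have := n_generic i; have := x_lt i.
rewrite /t_of /s_of /r_of; case: (i \in J) => /= *; split; lia.
Qed.

Lemma Omega_gap_dvd k : (N %| Omega_at p gap k)%Z.
Proof.
apply: (Omega_at_dvd_from0 p_gt0 f_gt0); rewrite Omega_at0 //.
move: Jx_in chiE => /inSE[_ /charI_eq_dvd dvd1 /charI_eq_dvd dvd2] /charI_eq_dvd dvd3.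
have -> : omega_exp p gap
    = (c2 - omega_exp p (fun i => a i + e%:Z - s i)) + (c1 - c2 - omega_exp p n)
      - (c1 - omega_exp p (fun i => b i + s i)).
  suff -> : omega_exp p gap = omega_exp p (fun i => b i + s i)
      - omega_exp p (fun i => a i + e%:Z - s i) - omega_exp p n by ring.
  by rewrite -!omega_expB; apply: eq_bigr => i _; rewrite /gap /t_of; ring.
by rewrite rpredB // rpredD.
Qed.

Lemma Omega_gap_carry j : Omega p gap j = carry j * N.
Proof. by rewrite divzK // Omega_at_ord Omega_gap_dvd. Qed.

Lemma gap_carry i : gap i = p%:Z * carry (ordS i) - carry i.
Proof.
apply: (mulIf N_neq0); have := Omega_atS p_gt0 f_gt0 gap i.
rewrite (at_idx_ord f_gt0) -(Omega_ordS p f_gt0) -Omega_at_ord !Omega_gap_carry => E.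
by rewrite [RHS]mulrBl -mulrA E; ring.
Qed.

Lemma gap_le i : gap i <= p%:Z - 1.
Proof. by case: (index_data i) => *; rewrite /gap; lia. Qed.

Lemma gap_ge i : - (2 * p%:Z - 1) <= gap i.
Proof. by case: (index_data i) => *; rewrite /gap; lia. Qed.

Lemma gap_eq_max i : gap i = p%:Z - 1 -> [/\ r i = p%:Z, n i = e%:Z & t i = 0].
Proof. by rewrite /gap => gap_max; case: (index_data i) => *; split; lia. Qed.

Lemma carry_le1 j : carry j <= 1.
Proof.
have := Omega_at_le p f_gt0 j gap_le.
by rewrite -Omega_at_ord Omega_gap_carry -N_factor; nia.
Qed.

Lemma carry_ge j : -3 <= carry j /\ (carry j = -3 -> p = 2%N).
Proof.
have := Omega_at_ge p f_gt0 j gap_ge; rewrite -Omega_at_ord Omega_gap_carry N_factor => ge.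
have {ge} : - (2 * p%:Z - 1) <= (p%:Z - 1) * carry j by nia.
by split; nia.
Qed.

Lemma carry_eq1 j : carry j = 1 -> forall i, [/\ r i = p%:Z, n i = e%:Z & t i = 0].
Proof.
move=> carry1 i; apply: gap_eq_max; apply: (Omega_at_eq_max p_gt0 f_gt0 gap_le (k := j)).
by rewrite -Omega_at_ord Omega_gap_carry carry1 mul1r N_factor mulrC.
Qed.

Let e_gt0 : (0 < e)%N.
Proof. exact: leq_ltn_trans (x_lt (Ordinal f_gt0)). Qed.

Lemma carry_cases_of_dvd i : (p%:Z %| s i - t i)%Z ->
  (carry i = 1 /\ n i = 1) \/ carry i <= -1.
Proof.
move=> dvd_p.
have : (p%:Z %| n i - carry i)%Z.
  have -> : n i - carry i = (s i - t i) - p%:Z * carry (ordS i).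
    by have := gap_carry i; rewrite /gap; lia.
  by rewrite rpredB // dvdz_mulr.
case/dvdzP => q qE; have := carry_le1 i; have := n_generic i.
have [q_le0 | q_gt0] := lerP q 0; nia.
Qed.

Lemma carry_succ_neg_start k : t k < r k -> carry (ordS k) <= -1 ->
  [/\ e = 1%N, carry k = -2, carry (ordS k) = -1, k \in J & r k = 1].
Proof.
move=> t_lt_r carry_neg; have [r_range n_range xk_lt tE s_cases] := index_data k.
have [k_in_J sE] : k \in J /\ s k = r k + (x k)%:Z.
  by case: s_cases => [// | [_ sE]]; lia.
have gap_ge_n : 1 - n k <= gap k by rewrite /gap; lia.
have carry_ge2 : -2 <= carry k.
  have := Omega_at_ge_head p f_gt0 k gap_ge.
  rewrite (at_idx_ord f_gt0) -Omega_at_ord Omega_gap_carry N_factor => head_le.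
  have N_ge0 : 0 <= (p%:Z - 1) * geo by rewrite -N_factor.
  case: (lerP (-2) (carry k)) => // carry_lt; nia.
have := gap_carry k; rewrite /gap => gapE.
have e1 : e = 1%N by nia.
by split => //; nia.
Qed.

Lemma carry_step i : e = 1%N -> carry (ordS i) = -2 ->
  [/\ i \notin J, p%:Z - 1 <= r i & carry i != -2 -> r i = p%:Z].
Proof.
move=> e1 carry_next; have [r_range n_range xi_lt tE s_cases] := index_data i.
have := gap_carry i; rewrite carry_next /gap => gapE.
have [carry_ge3 carry_eq3] := carry_ge i.
case: s_cases => [[_ sE] | [i_notin_J sE]]; first by lia.
by split => // [|/eqP]; lia.
Qed.

Lemma carry_chain k : e = 1%N -> carry k = -2 -> carry (ordS k) != -2 ->
  exists2 L, (0 < L < f)%N & forall i, (0 < back_dist k i <= L)%N ->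
    i \notin J /\ r i = (if (back_dist k i < L)%N then p%:Z - 1 else p%:Z).
Proof.
move=> e1 carry_k carry_Sk.
pose stop i := (carry i != -2) || (r i == p%:Z).
pose stops_at l := (0 < l)%N && [exists i, (back_dist k i == l) && stop i].
have Sk_neq_k : ordS k != k by apply: contraNneq carry_Sk => ->; rewrite carry_k.
have stops_Sk : stops_at (back_dist k (ordS k)).
  rewrite /stops_at lt0n back_dist_eq0 Sk_neq_k /=.
  by apply/existsP; exists (ordS k); rewrite eqxx /stop carry_Sk.
have [L /andP[L_gt0 /existsP[w /andP[/eqP w_dist w_stop]]] L_min] :=
  ex_minnP (ex_intro stops_at _ stops_Sk).
have not_stop i : (0 < back_dist k i < L)%N -> ~~ stop i.
  move=> /andP[d_gt0 d_lt]; apply/negP => stop_i.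
  have : (L <= back_dist k i)%N.
    by apply: L_min; rewrite /stops_at d_gt0; apply/existsP; exists i; rewrite eqxx.
  by rewrite leqNgt d_lt.
have carry_prev i : (0 < back_dist k i <= L)%N -> carry (ordS i) = -2.
  move=> /andP[d_gt0 d_le]; have i_neq_k : i != k by rewrite -back_dist_eq0 -lt0n.
  have := back_dist_ordS k i; rewrite (negbTE i_neq_k) => dS.
  have [/eqP | dS_gt0] := posnP (back_dist k (ordS i)).
    by rewrite back_dist_eq0 => /eqP ->.
  have d_pred : ((back_dist k i).-1 < L)%N by rewrite prednK.
  move: (not_stop (ordS i)); rewrite dS_gt0 dS d_pred negb_or negbK.
  by move=> /(_ isT) /andP[/eqP].
exists L => [|i d_range].
  by rewrite L_gt0 (leq_ltn_trans (L_min _ stops_Sk)) ?back_dist_lt.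
have [i_notin_J r_ge r_stop] := carry_step e1 (carry_prev i d_range).
split => //; case: ltnP => d_L.
  have := not_stop i; rewrite d_L andbT; case/andP: d_range => -> _.
  rewrite negb_or negbK => /(_ isT) /andP[_ /eqP r_neq].
  by have := index_data i; case; lia.
have i_eq_w : i = w.
  apply: (@back_dist_inj _ k); rewrite w_dist; apply/eqP.
  by rewrite eqn_leq d_L andbT; case/andP: d_range.
by move: w_stop; rewrite -i_eq_w /stop => /orP[/r_stop | /eqP].
Qed.

Lemma maximal_no_shift J' (m : 'I_f -> nat) :
  (forall i, s_of a b J' x i - s i = p%:Z * (m (ordS i))%:Z - (m i)%:Z) ->
  forall j, m j = 0%N.
Proof.
move=> shiftE j.
have Omega_fwd k : Omega_at p (fun i => s_of a b J' x i - s i) k = N * at_idx m k.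
  exact: Omega_at_shift.
have J'_in : inS p e c1 c2 a b J' x.
  by apply: (inS_move Jx_in x_lt); rewrite -(Omega_at0 p f_gt0) Omega_fwd dvdz_mulr.
have prec : preceq p a b J x J' x.
  by move=> i; exists (m i); rewrite Omega_at_ord Omega_fwd (at_idx_ord f_gt0).
have [k kE] := Jx_max J'_in prec j.
have : Omega p (fun i => s i - s_of a b J' x i) j = N * - (m j)%:Z.
  rewrite Omega_at_ord (Omega_at_shift p_gt0 f_gt0 (m := fun i => - (m i)%:Z)).
    by rewrite (at_idx_ord f_gt0).
  by move=> i; have := shiftE i; lia.
by rewrite kE => /(mulfI N_neq0); lia.
Qed.

Lemma no_carry_chain k L : e = 1%N -> k \in J -> r k = 1 -> (0 < L < f)%N ->
  (forall i, (0 < back_dist k i <= L)%N ->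
    i \notin J /\ r i = (if (back_dist k i < L)%N then p%:Z - 1 else p%:Z)) ->
  False.
Proof.
move=> e1 k_in_J rk1 /andP[L_gt0 L_lt_f] chain.
pose J' := [set i | if (back_dist k i <= L)%N then (0 < back_dist k i)%N else i \in J].
pose m i := nat_of_bool (back_dist k i < L)%N.
have dist_k : back_dist k k = 0%N by apply/eqP; rewrite back_dist_eq0.
have sE (J0 : {set 'I_f}) i : s_of a b J0 x i = if i \in J0 then r i else 0.
  by rewrite /s_of; have := x_lt i; rewrite e1 ltnS leqn0 => /eqP ->; rewrite addr0.
suff /maximal_no_shift/(_ k) :
    forall i, s_of a b J' x i - s i = p%:Z * (m (ordS i))%:Z - (m i)%:Z.
  by rewrite /m dist_k L_gt0.
move=> i; rewrite !sE inE /m back_dist_ordS.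
have [-> | i_neq_k] := eqVneq i k.
  by rewrite dist_k /= k_in_J rk1 ltnNge -ltnS prednK // L_lt_f L_gt0 /=; ring.
have d_gt0 : (0 < back_dist k i)%N by rewrite lt0n back_dist_eq0.
have [d_le | d_gt] := leqP (back_dist k i) L.
  have [i_notin_J ->] := chain i (introT andP (conj d_gt0 d_le)).
  rewrite d_gt0 (negbTE i_notin_J) -ltnS prednK //= ltnS d_le.
  by case: ltnP => _ /=; ring.
have [-> ->] : ((back_dist k i).-1 < L)%N = false /\ (back_dist k i < L)%N = false.
  by split; apply/negbTE; rewrite -leqNgt; lia.
by rewrite subrr /=; ring.
Qed.

Lemma carry_succ_neg_absurd k : t k < r k -> carry (ordS k) <= -1 -> False.
Proof.
move=> t_lt_r carry_neg.
have [e1 carry_k carry_Sk k_in_J rk1] := carry_succ_neg_start t_lt_r carry_neg.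
have [|L L_range chain] := carry_chain e1 carry_k; first by rewrite carry_Sk.
exact: no_carry_chain e1 k_in_J rk1 L_range chain.
Qed.

Lemma dvd_s_sub_t_ordS k : t k < r k ->
  (p%:Z %| s (ordS k) - t (ordS k))%Z <->
  e = 1%N /\ (forall i, [/\ r i = p%:Z, n i = 1 & t i = 0]).
Proof.
move=> t_lt_r; split => [dvd_p | [e1 all_i]].
  have [[/carry_eq1 all_i n1] | carry_neg] := carry_cases_of_dvd dvd_p; last first.
    by case: (carry_succ_neg_absurd t_lt_r carry_neg).
  have e1 : e = 1%N by have [_ nE _] := all_i (ordS k); lia.
  by split => // i; have [? ? ?] := all_i i; split => //; lia.
have [_ _ _ tE _] := index_data (ordS k); have [rp _ t0] := all_i (ordS k).
by rewrite (_ : s (ordS k) - t (ordS k) = p%:Z) //; lia.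
Qed.

Lemma xi_sub_tE k :
  xi_of p e a b J x k - t k * N = p%:Z * Omega_at p (fun i => s i - t i) k.+1.
Proof. by rewrite (Omega_atS p_gt0 f_gt0) (at_idx_ord f_gt0) /xi_of Omega_at_ord; ring. Qed.

End MaximalElement.

Theorem proposition5p12
  (p e f : nat) (Hp : prime p) (He : (0 < e)%N) (Hf : (0 < f)%N)
  (c1 c2 : int) (n : 'I_f -> int)
  (Hn : forall i, 1 <= n i <= p%:Z) (Hnlt : exists i, n i < p%:Z)
  (Hchi : charI_eq p (c1 - c2) n)
  (Hgen : forall i, e%:Z <= n i <= p%:Z - e%:Z)
  (a b : 'I_f -> int) (Hab : forall i, 0 <= a i - b i <= p%:Z - 1)
  (J : {set 'I_f}) (x : 'I_f -> nat)
  (HS : inS p e c1 c2 a b J x)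
  (Hmax : forall (J' : {set 'I_f}) (x' : 'I_f -> nat),
      inS p e c1 c2 a b J' x' -> preceq p a b J x J' x' -> preceq p a b J' x' J x)
  (kappa : 'I_f) (Hk : t_of e a b J x kappa < r_of a b kappa) :
  vp_gt p (xi_of p e a b J x kappa - t_of e a b J x kappa * ((p ^ f).-1)%:Z) 1
  <-> (e = 1%N /\ forall i : 'I_f,
         [/\ r_of a b i = p%:Z, n i = 1 & t_of e a b J x i = 0]).
Proof.
rewrite xi_sub_tE // vp_gt1_mulp // dvdp_Omega_at // at_idx_ordS //.
exact: (dvd_s_sub_t_ordS Hp Hf Hchi Hgen Hab HS Hmax Hk).
Qed.
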